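(* For every countable ordinal $\lambda<\omega_1$ there is a continuous map $g_\lambda:[0,1]\to[0,1]$ such that the chain components poset $(\mathfrak{C}_{g_\lambda},\preceq)$ is order isomorphic to $(\lambda+1,\ni)$, i.e. to the reverse of the usual order on the ordinal $\lambda+1$.
   Context: For a map $g:[0,1]\to[0,1]$ with the usual metric: an $\varepsilon$-chain from $x$ to $y$ is a finite sequence $x_0=x,\dots,x_n=y$, $n\ge1$, with $|g(x_i)-x_{i+1}|<\varepsilon$; $x\,\mathcal{C}\,y$ iff for every $\varepsilon>0$ there is an $\varepsilon$-chain from $x$ to $y$; $CR_g=\{x:x\,\mathcal{C}\,x\}$; $x\,E\,y$ iff $x\,\mathcal{C}\,y$ and $y\,\mathcal{C}\,x$; $\mathfrak{C}_g=CR_g/E$ is the set of chain components, partially ordered by $[x]\preceq[y]$ iff $y\,\mathcal{C}\,x$. *)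

From Stdlib Require Import Reals.
Open Scope R_scope.

Definition I01 (x : R) : Prop := 0 <= x <= 1.

Definition maps_unit (g : R -> R) : Prop := forall x, I01 x -> I01 (g x).

Definition continuous_on_unit (g : R -> R) : Prop :=
  forall x, I01 x -> forall eps, 0 < eps ->
    exists delta, 0 < delta /\
      forall y, I01 y -> Rabs (y - x) < delta -> Rabs (g y - g x) < eps.

Definition eps_chain (g : R -> R) (eps x y : R) : Prop :=
  exists (n : nat) (xs : nat -> R),
    (1 <= n)%nat /\ xs 0%nat = x /\ xs n = y /\
    (forall i, (i <= n)%nat -> I01 (xs i)) /\
    (forall i, (i < n)%nat -> Rabs (g (xs i) - xs (S i)) < eps).

Definition chain_rel (g : R -> R) (x y : R) : Prop :=
  forall eps, 0 < eps -> eps_chain g eps x y.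

Definition CR (g : R -> R) (x : R) : Prop := I01 x /\ chain_rel g x x.

Definition chainE (g : R -> R) (x y : R) : Prop := chain_rel g x y /\ chain_rel g y x.

(* Chain component order on CR_g/E: [x] ≼ [y] iff y C x. *)
Definition comp_le (g : R -> R) (x y : R) : Prop := chain_rel g y x.

(* Countable ordinals of the form lambda+1 (lambda < omega_1) are, up to
   isomorphism, exactly the countable (strict) well-orders with a greatest
   element. *)
Definition strict_well_order {T : Type} (lt : T -> T -> Prop) : Prop :=
  (forall a, ~ lt a a) /\
  (forall a b c, lt a b -> lt b c -> lt a c) /\
  (forall a b, lt a b \/ a = b \/ lt b a) /\
  well_founded lt.

Definition countable_type (T : Type) : Prop :=
  exists f : T -> nat, forall a b, f a = f b -> a = b.

Definition has_greatest {T : Type} (lt : T -> T -> Prop) : Prop :=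
  exists m : T, forall a, a <> m -> lt a m.

Definition ord_le {T : Type} (lt : T -> T -> Prop) (a b : T) : Prop := lt a b \/ a = b.

(* (CR_g/E, ≼) is order isomorphic to (T, ∋), the reverse of the ordinal order.
   Written out via the quotient map: phi : CR_g -> T is surjective onto T and
   [x] ≼ [y]  <->  phi y <= phi x  (i.e. phi x ∋ phi y or equal).
   Since ord_le is antisymmetric, phi x = phi y <-> x E y, so phi descends to a
   bijection CR_g/E -> T which is an order isomorphism, and conversely any such
   isomorphism composed with the quotient map yields such a phi. *)
Definition components_iso_reverse (g : R -> R) {T : Type} (lt : T -> T -> Prop) : Prop :=
  exists phi : R -> T,
    (forall t : T, exists x, CR g x /\ phi x = t) /\
    (forall x y, CR g x -> CR g y -> (comp_le g x y <-> ord_le lt (phi y) (phi x))).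

From Stdlib Require Import Reals Lra Lia Classical ClassicalEpsilon.
Open Scope R_scope.

(* Enumerate the countable well-order by an injection [f] into [nat] and send [t] to the
   total weight [2^-(f s + 1)] of the elements [s] below [t], shifted so that the greatest
   element goes to 1.  This strictly increasing map has a closed range [H] in [0,1], and
   consecutive elements leave a gap outside [H] between their images.  The map
   [g x = x + d(x, H) / 2] is continuous, nondecreasing, above the diagonal, and fixes
   exactly [H].  For such a map chains can only climb: a point [z] with [z < g z] cannot
   be crossed downwards by eps-chains with [eps < (g z - z) / 2], whereas an eps-chain
   climbs from any point to any fixed point above it.  Hence [CR_g = H], every chain
   component is a single point, and [y C x] iff [y <= x], which reverses the order of
   the ordinal. *)

Section NondecreasingAboveDiagonal.

Variable g : R -> R.
Hypothesis g_nondecr : forall x y, I01 x -> I01 y -> x <= y -> g x <= g y.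
Hypothesis g_above : forall x, I01 x -> x <= g x.

Lemma eps_chain_stays_above z x y :
  I01 z -> z < g z -> z <= x -> eps_chain g ((g z - z) / 2) x y -> z < y.
Proof.
  intros Iz Hz Hx [n [xs [Hn [H0 [Hny [HI Hs]]]]]].
  assert (step : forall i, (i < n)%nat -> z <= xs i -> z < xs (S i)).
  { intros i Hi Hzi. specialize (Hs i Hi). apply Rabs_def2 in Hs.
    assert (g z <= g (xs i)) by (apply g_nondecr; auto; apply HI; lia). lra. }
  assert (above : forall i, (i <= n)%nat -> z <= xs i).
  { induction i as [|i IH]; intros Hi; [rewrite H0; lra|].
    left. apply step; [lia|]. apply IH. lia. }
  subst y. destruct n as [|n]; [lia|]. apply step; [lia|]. apply above. lia.
Qed.

Lemma CR_fixpoint x : CR g x -> g x = x.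
Proof.
  intros [Ix Hxx]. destruct (Rle_lt_or_eq_dec _ _ (g_above x Ix)) as [Hlt|Heq]; [|auto].
  pose proof (eps_chain_stays_above x x x Ix Hlt (Rle_refl x) (Hxx ((g x - x) / 2) ltac:(lra))). lra.
Qed.

Lemma not_chain_rel_down z x y :
  I01 z -> z < g z -> z <= x -> y <= z -> ~ chain_rel g x y.
Proof.
  intros Iz Hz Hx Hy Hxy.
  pose proof (eps_chain_stays_above z x y Iz Hz Hx (Hxy ((g z - z) / 2) ltac:(lra))). lra.
Qed.

Fixpoint climb (x y h : R) (n : nat) : R :=
  match n with O => x | S k => Rmin y (g (climb x y h k) + h) end.

Section Climb.

Variables x y h : R.
Hypotheses (Ix : I01 x) (Iy : I01 y) (Hxy : x <= y) (Hh : 0 <= h).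

Lemma climb_between n : x <= climb x y h n <= y.
Proof.
  induction n as [|n IH]; simpl; [lra|].
  assert (Ic : I01 (climb x y h n)) by (unfold I01 in *; lra).
  pose proof (g_above _ Ic). unfold Rmin; destruct (Rle_dec _ _); lra.
Qed.

Lemma climb_progress n : Rmin y (x + INR n * h) <= climb x y h n.
Proof.
  induction n as [|n IH]; simpl climb.
  - simpl INR. unfold Rmin; destruct (Rle_dec _ _); lra.
  - rewrite S_INR, Rmult_plus_distr_r, Rmult_1_l.
    pose proof (climb_between n).
    assert (Ic : I01 (climb x y h n)) by (unfold I01 in *; lra).
    pose proof (g_above _ Ic). set (k := INR n * h) in *.
    revert IH. unfold Rmin; repeat destruct (Rle_dec _ _); lra.
Qed.

End Climb.

Lemma chain_rel_to_fixpoint x y : I01 x -> I01 y -> x <= y -> g y = y -> chain_rel g x y.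
Proof.
  intros Ix Iy Hxy Hy eps Heps.
  set (h := eps / 2).
  assert (Hh : 0 < h < eps) by (unfold h; lra).
  assert (Hh0 : 0 <= h) by lra.
  pose proof (climb_between x y h Ix Iy Hxy Hh0) as between.
  destruct (INR_archimed h (y - x)) as [n Hn]; [lra|].
  exists (S n), (climb x y h). split; [lia|]. split; [reflexivity|]. split.
  { apply Rle_antisym; [apply between|].
    eapply Rle_trans; [|apply (climb_progress x y h Ix Iy Hxy Hh0)].
    rewrite S_INR, Rmult_plus_distr_r. unfold Rmin; destruct (Rle_dec _ _); lra. }
  split; [intros i _; pose proof (between i); unfold I01 in *; lra|].
  (* Each jump is either exactly [h], or lands on [y] from [g c <= g y = y]. *)
  intros i _. simpl climb. set (c := climb x y h i).
  assert (Hc : x <= c <= y) by apply between.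
  assert (Ic : I01 c) by (unfold I01 in *; lra).
  pose proof (g_above c Ic).
  assert (g c <= y) by (rewrite <- Hy; apply g_nondecr; auto; lra).
  unfold Rmin; destruct (Rle_dec _ _); apply Rabs_def1; lra.
Qed.

Lemma chain_rel_fixpoints_iff x y : I01 x -> I01 y -> g y = y ->
  (y < x -> exists z, y <= z <= x /\ z < g z) -> (chain_rel g x y <-> x <= y).
Proof.
  intros Ix Iy Hy gap. split.
  - intros Hxy. destruct (Rle_or_lt x y) as [Hle|Hlt]; [exact Hle|].
    destruct (gap Hlt) as [z [Hz Hgz]]. exfalso.
    apply (not_chain_rel_down z x y); [unfold I01 in *; lra|tauto..].
  - intros Hxy. apply chain_rel_to_fixpoint; auto.
Qed.

End NondecreasingAboveDiagonal.

Definition range_closed {T : Type} (h : T -> R) : Prop :=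
  forall x, (forall t, h t <> x) -> exists d, 0 < d /\ forall t, d <= Rabs (x - h t).

Lemma gap_dist_pos {T : Type} (h : T -> R) a b x :
  a < x < b -> (forall t, h t <= a \/ b <= h t) ->
  exists d, 0 < d /\ forall t, d <= Rabs (x - h t).
Proof.
  intros Hx Hout. exists (Rmin (x - a) (b - x)). split; [apply Rmin_glb_lt; lra|].
  intros t. pose proof (Rmin_l (x - a) (b - x)).
  pose proof (Rmin_r (x - a) (b - x)). pose proof (Rle_abs (x - h t)).
  pose proof (Rabs_minus_sym x (h t)). pose proof (Rle_abs (h t - x)).
  destruct (Hout t); lra.
Qed.

Section DistanceToRange.

Variables (T : Type) (h : T -> R) (t0 : T).

Definition neg_dist_set x (r : R) : Prop := exists t, r = - Rabs (x - h t).

Lemma neg_dist_set_bound x : bound (neg_dist_set x).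
Proof. exists 0. intros r [t ->]. pose proof (Rabs_pos (x - h t)). lra. Qed.

Lemma neg_dist_set_inhabited x : exists r, neg_dist_set x r.
Proof. exists (- Rabs (x - h t0)), t0. reflexivity. Qed.

(* The infimum of the [|x - h t|]; [t0] only witnesses that the range is nonempty. *)
Definition dist_to_range x : R :=
  - proj1_sig (completeness _ (neg_dist_set_bound x) (neg_dist_set_inhabited x)).

Lemma dist_to_range_lub x : is_lub (neg_dist_set x) (- dist_to_range x).
Proof.
  unfold dist_to_range. destruct (completeness _ _ _). simpl. rewrite Ropp_involutive. exact i.
Qed.

Lemma dist_to_range_le x t : dist_to_range x <= Rabs (x - h t).
Proof.
  pose proof (proj1 (dist_to_range_lub x) _ (ex_intro _ t eq_refl)). lra.
Qed.

Lemma dist_to_range_glb x d : (forall t, d <= Rabs (x - h t)) -> d <= dist_to_range x.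
Proof.
  intros Hd. enough (- dist_to_range x <= - d) by lra.
  apply (proj2 (dist_to_range_lub x)). intros r [t ->]. specialize (Hd t). lra.
Qed.

Lemma dist_to_range_nonneg x : 0 <= dist_to_range x.
Proof. apply dist_to_range_glb. intros t. apply Rabs_pos. Qed.

Lemma dist_to_range_lipschitz x y : dist_to_range x - Rabs (x - y) <= dist_to_range y.
Proof.
  apply dist_to_range_glb. intros t. pose proof (dist_to_range_le x t).
  pose proof (Rabs_triang (x - y) (y - h t)).
  replace (x - y + (y - h t)) with (x - h t) in * by ring. lra.
Qed.

Lemma dist_to_range_image t : dist_to_range (h t) = 0.
Proof.
  pose proof (dist_to_range_le (h t) t). pose proof (dist_to_range_nonneg (h t)).
  rewrite Rminus_diag, Rabs_R0 in *. lra.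
Qed.

Definition drift x : R := x + dist_to_range x / 2.

Lemma drift_nondecr x y : x <= y -> drift x <= drift y.
Proof.
  intros Hxy. unfold drift. pose proof (dist_to_range_lipschitz x y).
  rewrite Rabs_minus_sym, Rabs_right in * by lra. lra.
Qed.

Lemma drift_above x : x <= drift x.
Proof. unfold drift. pose proof (dist_to_range_nonneg x). lra. Qed.

Lemma drift_maps_unit t1 : h t1 = 1 -> maps_unit drift.
Proof.
  intros H1 x [Hx0 Hx1]. unfold drift.
  pose proof (dist_to_range_nonneg x). pose proof (dist_to_range_le x t1).
  rewrite H1, Rabs_left1 in * by lra. split; lra.
Qed.

Lemma drift_continuous : continuous_on_unit drift.
Proof.
  intros x _ eps Heps. exists (eps / 2). split; [lra|]. intros y _ Hyx.
  pose proof (dist_to_range_lipschitz x y). pose proof (dist_to_range_lipschitz y x).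
  rewrite Rabs_minus_sym in H. pose proof (Rabs_def2 _ _ Hyx). unfold drift.
  apply Rabs_def1; lra.
Qed.

Lemma drift_image_fixpoint t : drift (h t) = h t.
Proof. unfold drift. rewrite dist_to_range_image. lra. Qed.

Lemma drift_fixpoint_in_range : range_closed h -> forall x, drift x = x -> exists t, h t = x.
Proof.
  intros Hclosed x Hx. apply NNPP. intros Hnot.
  destruct (Hclosed x) as [d [Hd Hdist]]; [intros t Ht; apply Hnot; exists t; exact Ht|].
  pose proof (dist_to_range_glb x d Hdist). unfold drift in Hx. lra.
Qed.

End DistanceToRange.

Definition indicator (A : nat -> Prop) (k : nat) : R :=
  if excluded_middle_informative (A k) then 1 else 0.

Fixpoint weight_upto (A : nat -> Prop) (N : nat) : R :=
  match N with O => 0 | S n => weight_upto A n + indicator A n * (/2) ^ S n end.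

Lemma indicator_bounds A k : 0 <= indicator A k <= 1.
Proof. unfold indicator. destruct (excluded_middle_informative _); lra. Qed.

Lemma indicator_true A k : A k -> indicator A k = 1.
Proof. unfold indicator. destruct (excluded_middle_informative _); tauto. Qed.

Lemma indicator_false A k : ~ A k -> indicator A k = 0.
Proof. unfold indicator. destruct (excluded_middle_informative _); tauto. Qed.

Lemma indicator_le (A B : nat -> Prop) k : (A k -> B k) -> indicator A k <= indicator B k.
Proof.
  intros H. unfold indicator.
  do 2 destruct (excluded_middle_informative _); try lra; tauto.
Qed.

Lemma half_pow_pos n : 0 < (/2) ^ n.
Proof. apply pow_lt. lra. Qed.

Lemma half_pow_S n : (/2) ^ S n = (/2) ^ n / 2.
Proof. simpl. field. Qed.

Lemma half_pow_small eps : 0 < eps -> exists N, (/2) ^ N < eps.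
Proof.
  intros Heps. destruct (pow_lt_1_zero (/2) ltac:(rewrite Rabs_right; lra) eps Heps) as [N HN].
  exists N. specialize (HN N (le_n N)). rewrite Rabs_right in HN; [exact HN|].
  left. apply half_pow_pos.
Qed.

Lemma weight_term_bounds A n : 0 <= indicator A n * (/2) ^ S n <= (/2) ^ S n.
Proof. pose proof (indicator_bounds A n). pose proof (half_pow_pos (S n)). nra. Qed.

Lemma weight_upto_mono A N M : (N <= M)%nat -> weight_upto A N <= weight_upto A M.
Proof. induction 1; cbn [weight_upto]; [lra|]. pose proof (weight_term_bounds A m). lra. Qed.

Lemma weight_upto_tail A N M : (N <= M)%nat ->
  weight_upto A M <= weight_upto A N + (/2) ^ N - (/2) ^ M.
Proof.
  induction 1; cbn [weight_upto]; [lra|].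
  pose proof (weight_term_bounds A m). rewrite half_pow_S in *. lra.
Qed.

Lemma weight_upto_sub (A B : nat -> Prop) N :
  (forall k, (k < N)%nat -> A k -> B k) -> weight_upto A N <= weight_upto B N.
Proof.
  induction N as [|N IH]; intros Hsub; cbn [weight_upto]; [lra|].
  pose proof (indicator_le A B N (Hsub N ltac:(lia))). pose proof (half_pow_pos (S N)).
  assert (weight_upto A N <= weight_upto B N) by (apply IH; intros; apply Hsub; auto; lia).
  nra.
Qed.

Lemma weight_upto_strict (A B : nat -> Prop) j : (forall k, A k -> B k) -> B j -> ~ A j ->
  forall N, (j < N)%nat -> weight_upto A N + (/2) ^ S j <= weight_upto B N.
Proof.
  intros Hsub Hb Ha. induction N as [|N IH]; intros Hj; [lia|]. cbn [weight_upto].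
  pose proof (half_pow_pos (S N)).
  destruct (Nat.eq_dec j N) as [->|Hne].
  - rewrite (indicator_true B N Hb), (indicator_false A N Ha).
    pose proof (weight_upto_sub A B N (fun k _ => Hsub k)). lra.
  - pose proof (indicator_le A B N (Hsub N)). specialize (IH ltac:(lia)). nra.
Qed.

Lemma weight_upto_le1 A N : weight_upto A N <= 1.
Proof.
  pose proof (weight_upto_tail A 0 N ltac:(lia)). pose proof (half_pow_pos N).
  simpl in *. lra.
Qed.

Definition partial_weights (A : nat -> Prop) (r : R) : Prop := exists N, r = weight_upto A N.

Lemma partial_weights_bound A : bound (partial_weights A).
Proof. exists 1. intros r [N ->]. apply weight_upto_le1. Qed.

Lemma partial_weights_inhabited A : exists r, partial_weights A r.
Proof. exists 0, 0%nat. reflexivity. Qed.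

(* [weight A] is the sum of [2^-(k+1)] over [k] in [A]. *)
Definition weight (A : nat -> Prop) : R :=
  proj1_sig (completeness _ (partial_weights_bound A) (partial_weights_inhabited A)).

Lemma weight_lub A : is_lub (partial_weights A) (weight A).
Proof. unfold weight. destruct (completeness _ _ _). exact i. Qed.

Lemma weight_ge_upto A N : weight_upto A N <= weight A.
Proof. apply (proj1 (weight_lub A)). exists N. reflexivity. Qed.

Lemma weight_le_upto A N : weight A <= weight_upto A N + (/2) ^ N.
Proof.
  apply (proj2 (weight_lub A)). intros r [M ->].
  destruct (Compare_dec.le_lt_dec N M) as [HNM|HMN].
  - pose proof (weight_upto_tail A N M HNM). pose proof (half_pow_pos M). lra.
  - pose proof (weight_upto_mono A M N ltac:(lia)). pose proof (half_pow_pos N). lra.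
Qed.

Lemma weight_bounds A : 0 <= weight A <= 1.
Proof. pose proof (weight_ge_upto A 0). pose proof (weight_le_upto A 0). simpl in *. lra. Qed.

Lemma weight_strict (A B : nat -> Prop) j : (forall k, A k -> B k) -> B j -> ~ A j ->
  weight A + (/2) ^ S j <= weight B.
Proof.
  intros Hsub Hb Ha. enough (weight A <= weight B - (/2) ^ S j) by lra.
  apply (proj2 (weight_lub A)). intros r [N ->].
  pose proof (weight_upto_mono A N (Nat.max N (S j)) ltac:(lia)).
  pose proof (weight_upto_strict A B j Hsub Hb Ha (Nat.max N (S j)) ltac:(lia)).
  pose proof (weight_ge_upto B (Nat.max N (S j))). lra.
Qed.

Lemma well_founded_minimal {T : Type} (lt : T -> T -> Prop) : well_founded lt ->
  forall P : T -> Prop, (exists x, P x) -> exists x, P x /\ forall y, lt y x -> ~ P y.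
Proof.
  intros wf P [x Hx]. apply NNPP. intros Hnone.
  apply (well_founded_ind wf (fun x => ~ P x)) with x; [|exact Hx].
  intros z IH Pz. apply Hnone. exists z. split; auto.
Qed.

Lemma predecessor_or_limit {T : Type} (lt : T -> T -> Prop) (t : T) :
  (exists p, lt p t /\ forall r, ~ (lt p r /\ lt r t)) \/
  (forall r, lt r t -> exists r', lt r r' /\ lt r' t).
Proof.
  destruct (classic (exists p, lt p t /\ forall r, ~ (lt p r /\ lt r t))) as [Hp|Hno];
    [left; exact Hp|right].
  intros r Hr. apply NNPP. intros Hn. apply Hno. exists r. split; [exact Hr|].
  intros r' [Hrr' Hr't]. apply Hn. exists r'. auto.
Qed.

Section WellOrderEmbedding.

Variables (T : Type) (lt : T -> T -> Prop) (f : T -> nat) (top : T).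
Hypotheses (lt_irrefl : forall a, ~ lt a a)
  (lt_trans : forall a b c, lt a b -> lt b c -> lt a c)
  (lt_total : forall a b, lt a b \/ a = b \/ lt b a)
  (lt_wf : well_founded lt)
  (f_inj : forall a b, f a = f b -> a = b)
  (top_greatest : forall a, a <> top -> lt a top).

Definition below (t : T) (k : nat) : Prop := exists s, lt s t /\ f s = k.

Definition embed (t : T) : R := weight (below t) + 1 - weight (below top).

Lemma below_mono s t k : lt s t -> below s k -> below t k.
Proof. intros Hst [r [Hrs Hr]]. exists r. eauto. Qed.

Lemma embed_lt s t : lt s t -> embed s < embed t.
Proof.
  intros Hst. unfold embed.
  assert (weight (below s) + (/2) ^ S (f s) <= weight (below t)).
  { apply weight_strict.
    - intros k. apply below_mono. exact Hst.
    - exists s. auto.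
    - intros [r [Hrs Hr]]. rewrite (f_inj r s Hr) in Hrs. exact (lt_irrefl s Hrs). }
  pose proof (half_pow_pos (S (f s))). lra.
Qed.

Lemma embed_le_iff a b : embed a <= embed b <-> ord_le lt a b.
Proof.
  unfold ord_le. split.
  - intros Hab. destruct (lt_total a b) as [H|[H|H]]; auto.
    pose proof (embed_lt b a H). lra.
  - intros [H|<-]; [left; apply embed_lt; exact H|lra].
Qed.

Lemma embed_inj a b : embed a = embed b -> a = b.
Proof.
  intros Hab. destruct (lt_total a b) as [H|[H|H]]; auto;
    apply embed_lt in H; lra.
Qed.

Lemma embed_top : embed top = 1.
Proof. unfold embed. ring. Qed.

Lemma embed_I01 t : I01 (embed t).
Proof.
  assert (embed t <= 1).
  { rewrite <- embed_top. apply embed_le_iff. unfold ord_le.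
    destruct (classic (t = top)); auto. }
  pose proof (weight_bounds (below t)). pose proof (weight_bounds (below top)).
  unfold I01, embed in *. lra.
Qed.

Lemma below_approx t0 : (exists s0, lt s0 t0) ->
  (forall r, lt r t0 -> exists r', lt r r' /\ lt r' t0) ->
  forall N, exists s, lt s t0 /\ forall k, (k < N)%nat -> below t0 k -> below s k.
Proof.
  intros [s0 Hs0] Hlim. induction N as [|N [s [Hs Hk]]].
  - exists s0. split; [exact Hs0|]. intros; lia.
  - destruct (classic (below t0 N)) as [[r [Hr Hfr]] | Hn].
    + assert (exists u, ord_le lt s u /\ ord_le lt r u /\ lt u t0) as [u [Hsu [Hru Hu]]].
      { unfold ord_le. destruct (lt_total s r) as [H|[H|H]]; [exists r|exists s; subst|exists s];
          auto. }
      destruct (Hlim u Hu) as [r' [Hur' Hr't0]].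
      assert (Hsr' : lt s r') by (destruct Hsu as [H|<-]; eauto).
      assert (Hrr' : lt r r') by (destruct Hru as [H|<-]; eauto).
      exists r'. split; [exact Hr't0|]. intros k Hk' Hk0.
      destruct (Nat.eq_dec k N) as [->|Hne]; [exists r; auto|].
      apply (below_mono s r'); auto. apply Hk; auto. lia.
    + exists s. split; [exact Hs|]. intros k Hk' Hk0.
      destruct (Nat.eq_dec k N) as [->|Hne]; [contradiction|]. apply Hk; auto. lia.
Qed.

Lemma embed_limit t0 : (exists s0, lt s0 t0) ->
  (forall r, lt r t0 -> exists r', lt r r' /\ lt r' t0) ->
  forall eps, 0 < eps -> exists s, lt s t0 /\ embed t0 < embed s + eps.
Proof.
  intros Hs0 Hlim eps Heps. destruct (half_pow_small eps Heps) as [N HN].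
  destruct (below_approx t0 Hs0 Hlim N) as [s [Hs Hk]].
  exists s. split; [exact Hs|]. unfold embed.
  pose proof (weight_le_upto (below t0) N). pose proof (weight_upto_sub _ _ N Hk).
  pose proof (weight_ge_upto (below s) N). lra.
Qed.

Lemma embed_no_between s u : (forall r, ~ (lt s r /\ lt r u)) ->
  forall r, embed r <= embed s \/ embed u <= embed r.
Proof.
  intros Hnone r. rewrite !embed_le_iff. unfold ord_le.
  destruct (lt_total r s) as [H|[H|H]]; auto.
  destruct (lt_total r u) as [H'|[H'|H']]; auto.
  exfalso. exact (Hnone r (conj H H')).
Qed.

Lemma embed_gap s t : lt s t -> exists z, embed s < z < embed t /\ forall r, embed r <> z.
Proof.
  intros Hst.
  destruct (well_founded_minimal lt lt_wf (lt s) (ex_intro _ t Hst)) as [u [Hsu Hmin]].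
  assert (Hut : embed u <= embed t).
  { apply embed_le_iff. unfold ord_le.
    destruct (lt_total u t) as [H|[H|H]]; auto. exfalso. exact (Hmin t H Hst). }
  pose proof (embed_lt s u Hsu).
  exists ((embed s + embed u) / 2). split; [lra|]. intros r Hr.
  assert (Hnone : forall r, ~ (lt s r /\ lt r u)) by (intros r' [H1 H2]; exact (Hmin r' H2 H1)).
  destruct (embed_no_between s u Hnone r); lra.
Qed.

Lemma embed_range_closed : range_closed embed.
Proof.
  intros x Hx.
  destruct (Rle_or_lt x 1) as [Hx1|Hx1].
  2:{ apply (gap_dist_pos embed 1 (x + 1) x); [lra|].
      intros t. left. apply embed_I01. }
  destruct (well_founded_minimal lt lt_wf (fun t => x <= embed t)) as [t0 [H0 Hmin]].
  { exists top. rewrite embed_top. exact Hx1. }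
  assert (Hgt : x < embed t0) by (destruct H0 as [H0|H0]; [exact H0|exfalso; exact (Hx t0 (eq_sym H0))]).
  destruct (predecessor_or_limit lt t0) as [[p [Hp Hnone]] | Hlim].
  - apply (gap_dist_pos embed (embed p) (embed t0) x).
    + split; [apply Rnot_le_lt; exact (Hmin p Hp)|exact Hgt].
    + exact (embed_no_between p t0 Hnone).
  - destruct (classic (exists s, lt s t0)) as [Hs|Hs].
    + exfalso. destruct (embed_limit t0 Hs Hlim (embed t0 - x)) as [s [Hst Hes]]; [lra|].
      apply (Hmin s Hst). lra.
    + apply (gap_dist_pos embed (x - 1) (embed t0) x); [lra|].
      intros r. right. apply embed_le_iff. unfold ord_le.
      destruct (lt_total t0 r) as [H|[H|H]]; auto. exfalso. eauto.
Qed.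

End WellOrderEmbedding.

Lemma successor_ordinal_closed_embedding (T : Type) (lt : T -> T -> Prop) :
  strict_well_order lt -> countable_type T -> has_greatest lt ->
  exists (h : T -> R) (top : T),
    h top = 1 /\ (forall t, I01 (h t)) /\ (forall a b, h a = h b -> a = b) /\
    (forall a b, h a <= h b <-> ord_le lt a b) /\ range_closed h /\
    (forall s t, h s < h t -> exists z, h s < z < h t /\ forall r, h r <> z).
Proof.
  intros [irr [tr [tot wf]]] [f inj] [top Htop].
  exists (embed T lt f top), top.
  split; [apply embed_top|]. split; [apply embed_I01; auto|].
  split; [apply embed_inj; auto|]. split; [apply embed_le_iff; auto|].
  split; [apply embed_range_closed; auto|].
  intros s t Hst. apply embed_gap; auto.
  destruct (tot s t) as [H|[<-|H]]; [exact H|lra|].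
  apply (embed_lt T lt f top irr tr inj) in H. lra.
Qed.

Theorem corollary2p4 :
  forall (T : Type) (lt : T -> T -> Prop),
    strict_well_order lt -> countable_type T -> has_greatest lt ->
    exists g : R -> R,
      maps_unit g /\ continuous_on_unit g /\ components_iso_reverse g lt.
Proof.
  intros T lt Hwo Hcount Hgreatest.
  destruct (successor_ordinal_closed_embedding T lt Hwo Hcount Hgreatest)
    as [h [top [Htop [HI [Hinj [Hle [Hclosed Hgap]]]]]]].
  set (g := drift T h top).
  assert (g_nondecr : forall x y, I01 x -> I01 y -> x <= y -> g x <= g y)
    by (intros x y _ _; apply drift_nondecr).
  assert (g_above : forall x, I01 x -> x <= g x) by (intros x _; apply drift_above).
  assert (g_range : forall t, g (h t) = h t) by (intros t; apply drift_image_fixpoint).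
  assert (CR_range : forall x, CR g x -> exists t, h t = x)
    by (intros x Cx; apply (drift_fixpoint_in_range T h top Hclosed), CR_fixpoint; auto).
  exists g. split; [exact (drift_maps_unit T h top top Htop)|].
  split; [apply drift_continuous|].
  set (phi := fun x => epsilon (inhabits top) (fun t => h t = x)).
  assert (phiK : forall t, phi (h t) = t)
    by (intros t; apply Hinj, (epsilon_spec (inhabits top) (fun s => h s = h t)); eauto).
  exists phi. split.
  - intros t. exists (h t). split; [|apply phiK]. split; [apply HI|].
    apply chain_rel_to_fixpoint; auto using Rle_refl.
  - intros x y Cx Cy.
    destruct (CR_range x Cx) as [a <-]. destruct (CR_range y Cy) as [b <-].
    unfold comp_le. rewrite !phiK, <- Hle.
    apply chain_rel_fixpoints_iff; auto.
    intros Hab. destruct (Hgap a b Hab) as [z [Hz Hnot]].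
    assert (Iz : I01 z) by (pose proof (HI a); pose proof (HI b); unfold I01 in *; lra).
    exists z. split; [lra|].
    destruct (Rle_lt_or_eq_dec _ _ (g_above z Iz)) as [Hlt|Heq]; [exact Hlt|].
    destruct (drift_fixpoint_in_range T h top Hclosed z (eq_sym Heq)) as [r Hr].
    exfalso. exact (Hnot r Hr).
Qed.
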